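(* Assume $E_{l,m}$ is toric, i.e. $q-p$ divides $m$, and write $m=a(q-p)$. Then the set $\mathcal H^B$ of $B$-fixed points of $\mathcal H$ consists of the single point $[J_0]$, where $J_0=(X_0^{q-p},\; X_2,\; X_4,\; X_1^{aq}X_3^{ap}) \subset \mathbb C[X_0,X_1,X_2,X_3,X_4]$.
   Context: Let $l=p/q \in \mathbb Q \cap (0,1]$ with $\gcd(p,q)=1$ and $m \in \mathbb N$. Let $H_{q-p}=\{X_0^{q-p}=X_1X_4-X_2X_3\} \subset \mathbb C^5$, where $\mathbb C^5=V(0)\oplus V(1)\oplus V(1)$ with coordinates $X_0,\dots,X_4$ and $SL(2)$ acts by left multiplication on the matrix $\begin{pmatrix} X_1 & X_3\\ X_2 & X_4\end{pmatrix}$. Let $G_0=\{\mathrm{diag}(t,t^{-p},t^{-p},t^q,t^q): t\in\mathbb C^*\}$ and $G_m=\{\mathrm{diag}(1,\zeta^{-1},\zeta^{-1},\zeta,\zeta): \zeta^m=1\}$; these commute with the $SL(2)$-action. Let $E_{l,m}=H_{q-p}/\!\!/(G_0\times G_m)$ (Popov's 3-dimensional affine normal quasihomogeneous $SL(2)$-variety). Identify $\mathrm{Irr}(G_0\times G_m)$ with $\mathbb Z\times\mathbb Z/m\mathbb Z$ and let $h(n,d)=1$ for all $(n,d)$ (the Hilbert function of the general fibers of the quotient morphism). Let $\mathcal H=\mathrm{Hilb}^{G_0\times G_m}_h(H_{q-p})$ be the invariant Hilbert scheme, with the $SL(2)$-action induced from $H_{q-p}$, and let $B\subset SL(2)$ be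 the Borel subgroup of upper triangular matrices. *)

From HB Require Import structures.
From mathcomp Require Import all_boot all_order all_algebra.
From mathcomp Require Import reals.
From mathcomp Require Import complex.
From mathcomp Require Import mpoly.
Set Implicit Arguments. Unset Strict Implicit. Unset Printing Implicit Defensive.
Import Order.TTheory GRing.Theory Num.Theory.
Local Open Scope ring_scope.

Section Defs.
Variable C : comRingType.

Definition Xc (k : nat) : {mpoly C[5]} := 'X_(inord k).

Definition is_ideal (J : {mpoly C[5]} -> Prop) : Prop :=
  [/\ J 0, (forall f g, J f -> J g -> J (f + g)) & (forall f g, J g -> J (f * g))].

Definition Heq (p q : nat) : {mpoly C[5]} :=
  Xc 0 ^+ (q - p) - (Xc 1 * Xc 4 - Xc 2 * Xc 3).

Definition inJ0 (p q a : nat) (f : {mpoly C[5]}) : Prop :=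
  exists c0 c1 c2 c3 : {mpoly C[5]},
    f = c0 * Xc 0 ^+ (q - p) + c1 * Xc 2 + c2 * Xc 4
        + c3 * (Xc 1 ^+ (a * q) * Xc 3 ^+ (a * p)).
End Defs.

Section DefsF.
Variable C : fieldType.

(* action of (t, zeta) in G_0 x G_m, i.e. of
   diag(t, t^-p zeta^-1, t^-p zeta^-1, t^q zeta, t^q zeta), on polynomial
   functions: f |-> f o g *)
Definition Gact (p q : nat) (t z : C) (f : {mpoly C[5]}) : {mpoly C[5]} :=
  f \mPo [tuple t *: Xc C 0;
                (t ^- p * z^-1) *: Xc C 1;
                (t ^- p * z^-1) *: Xc C 2;
                (t ^+ q * z) *: Xc C 3;
                (t ^+ q * z) *: Xc C 4].

(* action of b = [[b11, b12], [0, b22]] in B (left multiplication on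
   [[X1, X3], [X2, X4]]) on polynomial functions: f |-> f o b *)
Definition Bact (b11 b12 b22 : C) (f : {mpoly C[5]}) : {mpoly C[5]} :=
  f \mPo [tuple Xc C 0;
                b11 *: Xc C 1 + b12 *: Xc C 2;
                b22 *: Xc C 2;
                b11 *: Xc C 3 + b12 *: Xc C 4;
                b22 *: Xc C 4].

Definition G_stable (p q m : nat) (J : {mpoly C[5]} -> Prop) : Prop :=
  forall t z : C, t != 0 -> z ^+ m = 1 ->
    forall f, J f -> J (Gact p q t z f).

Definition B_stable (J : {mpoly C[5]} -> Prop) : Prop :=
  forall b11 b12 b22 : C, b11 * b22 = 1 ->
    forall f, J f -> J (Bact b11 b12 b22 f).

(* the class of f in C[X]/J lies in the isotypic component of the character
   (n, d) : (t, zeta) |-> t^n zeta^d of G_0 x G_m *)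
Definition in_isotypic (p q m : nat) (n d : int) (J : {mpoly C[5]} -> Prop)
    (f : {mpoly C[5]}) : Prop :=
  forall t z : C, t != 0 -> z ^+ m = 1 ->
    J (Gact p q t z f - (t ^ n * z ^ d) *: f).

Definition isotypic_dim1 (p q m : nat) (n d : int) (J : {mpoly C[5]} -> Prop)
  : Prop :=
  exists f, [/\ in_isotypic p q m n d J f, ~ J f &
    forall g, in_isotypic p q m n d J g -> exists c : C, J (g - c *: f)].

(* closed points of the invariant Hilbert scheme Hilb^{G_0 x G_m}_h(H_{q-p})
   with h = 1: G-stable ideals of C[H_{q-p}] = C[X]/(Heq), i.e. ideals of C[X]
   containing Heq, whose quotient has all isotypic components of dim 1 *)
Definition in_Hilb (p q m : nat) (J : {mpoly C[5]} -> Prop) : Prop :=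
  [/\ is_ideal J, J (Heq C p q), G_stable p q m J &
      forall n d : int, isotypic_dim1 p q m n d J].
End DefsF.

From Stdlib Require Import FunctionalExtensionality PropExtensionality.
From HB Require Import structures.
From mathcomp Require Import all_boot all_order all_algebra.
From mathcomp Require Import reals complex mpoly.
From mathcomp Require Import cyclic separable cyclotomic.
From mathcomp Require Import zify ring.
Import Order.TTheory GRing.Theory Num.Theory.
Local Open Scope ring_scope.
Set Implicit Arguments. Unset Strict Implicit. Unset Printing Implicit Defensive.

(* J_0 is a monomial ideal whose standard monomials X_0^i X_1^j X_3^k (i < q - p, and not both
   j >= aq and k >= ap) are weight vectors of G_0 x G_m of weight (i - pj + qk, k - j mod m).
   These weights are pairwise distinct and exhaust Z x Z/m: the condition on (j, k) cuts out a
   fundamental domain of the translation by (aq, ap), which preserves the weight. So every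
   isotypic component of C[X]/J_0 is a line, and [J_0] is a B-fixed point.
   Conversely, let J be a B-fixed point. Two elements of one isotypic component are proportional
   modulo J. The unipotent element of B maps X_1 to X_1 + X_2 and X_3 to X_3 + X_4 inside such
   components, forcing X_2, X_4 into J; the torus of B rescales X_1^(aq) X_3^(ap) but fixes 1,
   of the same weight, forcing that monomial into J; the equation of H_{q-p} then gives
   X_0^(q-p). Hence J_0 is contained in J. Finally, points of G_0 x G_m (with a primitive m-th
   root of unity) separate distinct weights, so a G-stable ideal containing a combination of
   standard monomials contains each of them; reducing an element of J modulo J_0 gives such a
   combination, and no standard monomial lies in J since it spans its isotypic component.
*)

Lemma closed_prim_root_exists (F : closedFieldType) (n : nat) :
  (0 < n)%N -> n%:R != 0 :> F -> exists z : F, n.-primitive_root z.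
Proof.
move=> n_gt0 n_neq0; pose P : {poly F} := 'X^n - 1.
have [r Dp] := closed_field_poly_normal P.
rewrite (monicP _) ?monicXnsubC // scale1r in Dp.
have r_roots : all n.-unity_root r by apply/allP=> z; rewrite -root_prod_XsubC -Dp.
have size_r : (n < (size r).+1)%N by rewrite -(size_prod_XsubC r id) -Dp size_XnsubC.
have [|z] := hasP (has_prim_root n_gt0 r_roots _ size_r); last by exists z.
by rewrite -separable_prod_XsubC -Dp separable_Xn_sub_1.
Qed.

Section CornerArithmetic.
Variables A B : nat.

Lemma corner_translate_eq0 (j1 k1 j2 k2 : nat) (e : int) :
  ~~ ((A <= j1) && (B <= k1))%N -> ~~ ((A <= j2) && (B <= k2))%N ->
  j2%:Z = j1%:Z + e * A%:Z -> k2%:Z = k1%:Z + e * B%:Z -> e = 0.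
Proof.
move=> /negP corner1 /negP corner2 ej ek.
case: (ltrgt0P e) => // e_sgn; exfalso; [apply: corner2 | apply: corner1].
  by apply/andP; split; nia.
by apply/andP; split; nia.
Qed.

Lemma corner_translate_exists (x y : int) : (0 < A)%N -> (0 < B)%N ->
  exists e : int, [/\ 0 <= x + e * A%:Z, 0 <= y + e * B%:Z &
    x + e * A%:Z < A%:Z \/ y + e * B%:Z < B%:Z].
Proof.
move=> A_gt0 B_gt0.
have [A0 B0] : 0 < A%:Z /\ 0 < B%:Z by split; lia.
have := modz_ge0 x (lt0r_neq0 A0); have := ltz_pmod x A0; have := divz_eq x A%:Z.
have := modz_ge0 y (lt0r_neq0 B0); have := ltz_pmod y B0; have := divz_eq y B%:Z.
(* the least translate of (x, y) with both coordinates nonnegative *)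
case: (lerP (- (x %/ A)%Z) (- (y %/ B)%Z)) => cmp ey lt_y ge_y ex lt_x ge_x.
- by exists (- (y %/ B)%Z); split; nia.
- by exists (- (x %/ A)%Z); split; nia.
Qed.

End CornerArithmetic.

Section StandardWeightArithmetic.
Variables p r a : nat.

Lemma triple_weight_inj (i1 j1 k1 i2 j2 k2 : nat) :
  (i1 < r)%N -> (i2 < r)%N ->
  ~~ ((a * (p + r) <= j1) && (a * p <= k1))%N ->
  ~~ ((a * (p + r) <= j2) && (a * p <= k2))%N ->
  i1%:Z - (p * j1)%N%:Z + ((p + r) * k1)%N%:Z
    = i2%:Z - (p * j2)%N%:Z + ((p + r) * k2)%N%:Z ->
  ((a * r)%N%:Z %| (k1%:Z - j1%:Z) - (k2%:Z - j2%:Z))%Z ->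
  [/\ i1 = i2, j1 = j2 & k1 = k2].
Proof.
move=> lt_i1 lt_i2 c1 c2 ew /dvdzP [e ev].
have shift_j : j2%:Z = j1%:Z + e * (a * (p + r))%N%:Z.
  have : r%:Z * (j2%:Z - j1%:Z - e * (a * (p + r))%N%:Z) = i1%:Z - i2%:Z.
    by rewrite !PoszM PoszD; nia.
  set y := (_ - _ - _) => ey.
  suff : y = 0 by rewrite /y; lia.
  have : y <= 0 by nia.
  have : 0 <= y by nia.
  lia.
have shift_k : k2%:Z = k1%:Z + e * (a * p)%N%:Z.
  by move: shift_j; rewrite !PoszM PoszD; nia.
have e0 := corner_translate_eq0 c1 c2 shift_j shift_k.
by move: shift_j shift_k ew; rewrite e0 !mul0r !addr0; split; lia.
Qed.

Lemma triple_weight_surj (n d : int) :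
  (0 < p)%N -> (0 < r)%N -> (0 < a)%N -> exists i j k : nat,
  [/\ (i < r)%N, ~~ ((a * (p + r) <= j) && (a * p <= k))%N,
      i%:Z - (p * j)%N%:Z + ((p + r) * k)%N%:Z = n &
      ((a * r)%N%:Z %| (k%:Z - j%:Z) - d)%Z].
Proof.
move=> p_gt0 r_gt0 a_gt0; set N := n - (p + r)%:Z * d.
have r0 : 0 < r%:Z by lia.
have := modz_ge0 N (lt0r_neq0 r0); have := ltz_pmod N r0; have := divz_eq N r%:Z.
set L := (N %/ r%:Z)%Z; set i := (N %% r%:Z)%Z => eN lt_i ge_i.
have [A_gt0 B_gt0] : (0 < a * (p + r))%N /\ (0 < a * p)%N by split; nia.
have [s [ge_j ge_k corner]] := corner_translate_exists L (L + d) A_gt0 B_gt0.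
exists (absz i), (absz (L + s * (a * (p + r))%N%:Z)), (absz (L + d + s * (a * p)%N%:Z)).
rewrite !gez0_abs //; split.
- by rewrite -ltz_nat gez0_abs.
- by apply/negP => /andP []; rewrite -!lez_nat !gez0_abs //; case: corner; lia.
- by rewrite /N in eN; rewrite !PoszM !PoszD; nia.
- by apply/dvdzP; exists (- s); rewrite !PoszM !PoszD; ring.
Qed.

End StandardWeightArithmetic.

Definition o0 : 'I_5 := inord 0.
Definition o1 : 'I_5 := inord 1.
Definition o2 : 'I_5 := inord 2.
Definition o3 : 'I_5 := inord 3.
Definition o4 : 'I_5 := inord 4.

Lemma ord5P (i : 'I_5) : i = o0 \/ i = o1 \/ i = o2 \/ i = o3 \/ i = o4.
Proof.
case: i => [[|[|[|[|[|k]]]]] lt_i5] //;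
  do ?[by left; apply: val_inj; rewrite /= inordK | right].
by apply: val_inj; rewrite /= inordK.
Qed.

Lemma mnm1_inordE (i j : nat) : (i < 5)%N -> (j < 5)%N ->
  U_(inord i : 'I_5)%MM (inord j) = (i == j).
Proof. by move=> lt_i lt_j; rewrite mnm1E -val_eqE /= !inordK. Qed.

Section Monomials.
Variable R : comRingType.
Local Notation X := (Xc R).

Lemma mpolyX5E (nu : 'X_{1..5}) :
  'X_[nu] = X 0 ^+ nu o0 * X 1 ^+ nu o1 * X 2 ^+ nu o2 * X 3 ^+ nu o3 * X 4 ^+ nu o4.
Proof.
rewrite mpolyXE_id !big_ord_recl big_ord0 mulr1 /Xc -!mulrA.
have Xn_inord i (j : 'I_5) : i = val j -> 'X_j ^+ nu j = 'X_(inord i) ^+ nu (inord i).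
  by move=> ->; rewrite inord_val.
by congr (_ * (_ * (_ * (_ * _)))); apply: Xn_inord.
Qed.

Lemma mcoeffMX_eq0 (c : {mpoly R[5]}) (g nu : 'X_{1..5}) :
  ~~ (g <= nu)%MM -> (c * 'X_[g])@_nu = 0.
Proof.
move=> g_nle; apply: memN_msupp_eq0; apply/negP.
rewrite (perm_mem (msuppMX c g)) => /mapP [k _ nuE].
by rewrite nuE lem_addr in g_nle.
Qed.

End Monomials.

Section IdealClosure.
Variables (R : comRingType) (J : {mpoly R[5]} -> Prop).
Hypothesis idJ : is_ideal J.

Lemma is_ideal0 : J 0.
Proof. by case: idJ. Qed.

Lemma is_idealD f g : J f -> J g -> J (f + g).
Proof. by case: idJ => _ + _; apply. Qed.

Lemma is_idealMl h f : J f -> J (h * f).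
Proof. by case: idJ => _ _; apply. Qed.

Lemma is_idealMr f h : J f -> J (f * h).
Proof. by rewrite mulrC; apply: is_idealMl. Qed.

Lemma is_idealZ c f : J f -> J (c *: f).
Proof. by rewrite -mul_mpolyC; apply: is_idealMl. Qed.

Lemma is_idealB f g : J f -> J g -> J (f - g).
Proof. by move=> Jf Jg; apply: is_idealD => //; rewrite -scaleN1r; apply: is_idealZ. Qed.

Lemma is_idealXD x y n : J y -> J ((x + y) ^+ n - x ^+ n).
Proof. by rewrite subrXX addrC addKr; apply: is_idealMr. Qed.

Lemma is_ideal_sum (I : Type) (r : seq I) (P : pred I) (F : I -> {mpoly R[5]}) :
  (forall i, P i -> J (F i)) -> J (\sum_(i <- r | P i) F i).
Proof.
move=> JF; elim/big_rec: _ => [|i f Pi Jf]; first exact: is_ideal0.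
by apply: is_idealD => //; apply: JF.
Qed.

Lemma is_ideal_msupp f : {in msupp f, forall nu, J 'X_[nu]} -> J f.
Proof.
move=> JX; rewrite (mpolyE f) big_seq_cond.
by apply: is_ideal_sum => nu /andP [nu_f _]; apply/is_idealZ/JX.
Qed.

End IdealClosure.

Lemma is_idealZK (F : fieldType) (J : {mpoly F[5]} -> Prop) (c : F) f :
  is_ideal J -> c != 0 -> J (c *: f) -> J f.
Proof. by move=> idJ c_neq0 /(is_idealZ idJ c^-1); rewrite scalerA mulVf ?scale1r. Qed.

Lemma le_mnm1n (n : nat) (i : 'I_n) (k : nat) (nu : 'X_{1..n}) :
  (U_(i) *+ k <= nu)%MM = (k <= nu i)%N.
Proof.
apply/mnm_lepP/idP => [/(_ i)|le_k j]; rewrite mulmnE mnm1E ?eqxx ?mul1n //.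
by case: eqP => [<-|_]; rewrite ?mul1n ?mul0n.
Qed.

Lemma le_mnm1 (n : nat) (i : 'I_n) (nu : 'X_{1..n}) : (U_(i) <= nu)%MM = (0 < nu i)%N.
Proof. by rewrite -le_mnm1n mulm1n. Qed.

Lemma le_mnm1nD (n : nat) (i j : 'I_n) (k l : nat) (nu : 'X_{1..n}) : i != j ->
  (U_(i) *+ k + U_(j) *+ l <= nu)%MM = (k <= nu i)%N && (l <= nu j)%N.
Proof.
move=> ij_neq; apply/mnm_lepP/andP => [le|[le_k le_l] h].
  have := le i; have := le j; rewrite !mnmDE !mulmnE !mnm1E !eqxx [j == i]eq_sym (negPf ij_neq).
  by rewrite !mul1n !mul0n addn0 add0n => -> ->.
rewrite mnmDE !mulmnE !mnm1E.
case: (eqVneq i h) => [ih|ih]; case: (eqVneq j h) => [jh|jh].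
- by rewrite ih jh eqxx in ij_neq.
- by rewrite mul1n mul0n addn0 -ih.
- by rewrite mul0n mul1n add0n -jh.
- by rewrite !mul0n.
Qed.

Section StandardMonomials.
Variables (R : comRingType) (p q a : nat).
Local Notation X := (Xc R).
Local Notation J0 := (@inJ0 R p q a).

Definition standard (nu : 'X_{1..5}) : bool :=
  [&& nu o2 == 0%N, nu o4 == 0%N, (nu o0 < q - p)%N &
      ~~ ((a * q <= nu o1) && (a * p <= nu o3))%N].

Definition gen0 : 'X_{1..5} := (U_(o0) *+ (q - p))%MM.
Definition gen13 : 'X_{1..5} := (U_(o1) *+ (a * q) + U_(o3) *+ (a * p))%MM.

Lemma standardN nu : ~~ standard nu =
  [|| (gen0 <= nu)%MM, (U_(o2) <= nu)%MM, (U_(o4) <= nu)%MM | (gen13 <= nu)%MM].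
Proof.
rewrite le_mnm1n !le_mnm1 le_mnm1nD; last by rewrite -val_eqE /= !inordK.
rewrite /standard !lt0n [(q - p <= _)%N]leqNgt.
by case: (nu o2 == 0%N); case: (nu o4 == 0%N); case: (nu o0 < q - p)%N; rewrite /= ?negbK.
Qed.

Lemma inJ0_ideal : is_ideal J0.
Proof.
split; first by exists 0, 0, 0, 0; rewrite !mul0r !addr0.
  move=> _ _ [c0 [c1 [c2 [c3 ->]]]] [d0 [d1 [d2 [d3 ->]]]].
  by exists (c0 + d0), (c1 + d1), (c2 + d2), (c3 + d3); ring.
move=> h _ [c0 [c1 [c2 [c3 ->]]]].
by exists (h * c0), (h * c1), (h * c2), (h * c3); ring.
Qed.

Lemma inJ0_gens :
  [/\ J0 (X 0 ^+ (q - p)), J0 (X 2), J0 (X 4) & J0 (X 1 ^+ (a * q) * X 3 ^+ (a * p))].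
Proof.
split; [exists 1, 0, 0, 0 | exists 0, 1, 0, 0 | exists 0, 0, 1, 0 | exists 0, 0, 0, 1];
  ring.
Qed.

Lemma Heq_inJ0 : J0 (Heq R p q).
Proof. by exists 1, (X 3), (- X 1), 0; rewrite /Heq; ring. Qed.

Lemma inJ0_min (J : {mpoly R[5]} -> Prop) : is_ideal J ->
  J (X 0 ^+ (q - p)) -> J (X 2) -> J (X 4) -> J (X 1 ^+ (a * q) * X 3 ^+ (a * p)) ->
  forall f, J0 f -> J f.
Proof.
move=> idJ J_X0 J_X2 J_X4 J_corner _ [c0 [c1 [c2 [c3 ->]]]].
by do !apply: (is_idealD idJ); apply: (is_idealMl idJ).
Qed.

Lemma inJ0_rmorph (phi : {rmorphism {mpoly R[5]} -> {mpoly R[5]}}) :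
  J0 (phi (X 0 ^+ (q - p))) -> J0 (phi (X 2)) -> J0 (phi (X 4)) ->
  J0 (phi (X 1 ^+ (a * q) * X 3 ^+ (a * p))) -> forall f, J0 f -> J0 (phi f).
Proof.
have [J0_0 J0_D J0_M] := inJ0_ideal.
apply: inJ0_min; split; [by rewrite rmorph0 | move=> f g | move=> f g].
  by rewrite rmorphD; apply: J0_D.
by rewrite rmorphM; apply: J0_M.
Qed.

Lemma inJ0_monomialE f : J0 f <-> exists c0 c1 c2 c3 : {mpoly R[5]},
  f = c0 * 'X_[gen0] + c1 * 'X_[U_(o2)] + c2 * 'X_[U_(o4)] + c3 * 'X_[gen13].
Proof. by rewrite /inJ0 /Xc mpolyXD !mpolyXn. Qed.

Lemma inJ0_mcoeff_standard f nu : J0 f -> standard nu -> f@_nu = 0.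
Proof.
case/inJ0_monomialE => [c0 [c1 [c2 [c3 ->]]]].
rewrite -[standard nu]negbK standardN => /norP [n0 /norP [n2 /norP [n4 n13]]].
by rewrite !mcoeffD !mcoeffMX_eq0 // !addr0.
Qed.

Lemma inJ0_nonstandard nu : ~~ standard nu -> J0 'X_[nu].
Proof.
rewrite standardN => /or4P [] le; rewrite -(submK le) mpolyXD;
  apply: (is_idealMl inJ0_ideal); apply/inJ0_monomialE.
- by exists 1, 0, 0, 0; ring.
- by exists 0, 1, 0, 0; ring.
- by exists 0, 0, 1, 0; ring.
- by exists 0, 0, 0, 1; ring.
Qed.

Lemma inJ0_reduce f : exists r, J0 (f - r) /\ {subset msupp r <= standard}.
Proof.
exists (\sum_(nu <- msupp f | standard nu) f@_nu *: 'X_[nu]); split.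
  rewrite {1}(mpolyE f) (bigID standard) /= addrC addrK.
  by apply: (is_ideal_sum inJ0_ideal) => nu /inJ0_nonstandard; apply: (is_idealZ inJ0_ideal).
move=> nu; apply: contraTT => nonstd; rewrite mcoeff_msupp negbK raddf_sum /=.
apply/eqP/big1 => mu std_mu; rewrite mcoeffZ mcoeffX.
by case: eqP => [mu_nu|]; [case/negP: nonstd; rewrite -mu_nu | rewrite mulr0].
Qed.

End StandardMonomials.

Section Actions.
Variable K : fieldType.
Local Notation X := (Xc K).

HB.instance Definition _ (p q : nat) (t z : K) :=
  GRing.LRMorphism.copy (Gact p q t z)
    (comp_mpoly [tuple t *: X 0; (t ^- p * z^-1) *: X 1; (t ^- p * z^-1) *: X 2;
                       (t ^+ q * z) *: X 3; (t ^+ q * z) *: X 4]).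

HB.instance Definition _ (b11 b12 b22 : K) :=
  GRing.LRMorphism.copy (Bact b11 b12 b22)
    (comp_mpoly [tuple X 0; b11 *: X 1 + b12 *: X 2; b22 *: X 2;
                       b11 *: X 3 + b12 *: X 4; b22 *: X 4]).

Variables (p q : nat) (t z : K).

Lemma GactX0 : Gact p q t z (X 0) = t *: X 0.
Proof. by rewrite /Gact /Xc comp_mpolyXU inordK. Qed.
Lemma GactX1 : Gact p q t z (X 1) = (t ^- p * z^-1) *: X 1.
Proof. by rewrite /Gact /Xc comp_mpolyXU inordK. Qed.
Lemma GactX2 : Gact p q t z (X 2) = (t ^- p * z^-1) *: X 2.
Proof. by rewrite /Gact /Xc comp_mpolyXU inordK. Qed.
Lemma GactX3 : Gact p q t z (X 3) = (t ^+ q * z) *: X 3.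
Proof. by rewrite /Gact /Xc comp_mpolyXU inordK. Qed.
Lemma GactX4 : Gact p q t z (X 4) = (t ^+ q * z) *: X 4.
Proof. by rewrite /Gact /Xc comp_mpolyXU inordK. Qed.

Variables b11 b12 b22 : K.

Lemma BactX0 : Bact b11 b12 b22 (X 0) = X 0.
Proof. by rewrite /Bact /Xc comp_mpolyXU inordK. Qed.
Lemma BactX1 : Bact b11 b12 b22 (X 1) = b11 *: X 1 + b12 *: X 2.
Proof. by rewrite /Bact /Xc comp_mpolyXU inordK. Qed.
Lemma BactX2 : Bact b11 b12 b22 (X 2) = b22 *: X 2.
Proof. by rewrite /Bact /Xc comp_mpolyXU inordK. Qed.
Lemma BactX3 : Bact b11 b12 b22 (X 3) = b11 *: X 3 + b12 *: X 4.
Proof. by rewrite /Bact /Xc comp_mpolyXU inordK. Qed.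
Lemma BactX4 : Bact b11 b12 b22 (X 4) = b22 *: X 4.
Proof. by rewrite /Bact /Xc comp_mpolyXU inordK. Qed.

End Actions.

Section StabilityJ0.
Variables (K : fieldType) (p q a : nat).
Local Notation X := (Xc K).
Local Notation J0 := (@inJ0 K p q a).
Local Notation m := (a * (q - p))%N.

Lemma inJ0_G_stable : G_stable p q m J0.
Proof.
have idJ0 := inJ0_ideal K p q a; have [J0_0 J0_2 J0_4 J0_13] := inJ0_gens K p q a.
move=> t z _ _; apply: inJ0_rmorph.
- by rewrite rmorphXn /= GactX0 exprZn; apply: is_idealZ.
- by rewrite /= GactX2; apply: is_idealZ.
- by rewrite /= GactX4; apply: is_idealZ.
rewrite rmorphM !rmorphXn /= GactX1 GactX3 !exprZn -scalerAl -scalerAr.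
by do 2!apply: is_idealZ => //.
Qed.

Lemma inJ0_B_stable : B_stable J0.
Proof.
have idJ0 := inJ0_ideal K p q a; have [J0_0 J0_2 J0_4 J0_13] := inJ0_gens K p q a.
move=> b11 b12 b22 _; apply: inJ0_rmorph.
- by rewrite rmorphXn /= BactX0.
- by rewrite /= BactX2; apply: is_idealZ.
- by rewrite /= BactX4; apply: is_idealZ.
rewrite rmorphM !rmorphXn /= BactX1 BactX3.
set x1 := b11 *: X 1; set x3 := b11 *: X 3; set y2 := b12 *: X 2; set y4 := b12 *: X 4.
have -> : (x1 + y2) ^+ (a * q) * (x3 + y4) ^+ (a * p) =
    ((x1 + y2) ^+ (a * q) - x1 ^+ (a * q)) * (x3 + y4) ^+ (a * p)
    + x1 ^+ (a * q) * ((x3 + y4) ^+ (a * p) - x3 ^+ (a * p))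
    + x1 ^+ (a * q) * x3 ^+ (a * p) by ring.
apply: is_idealD => //; first apply: is_idealD => //.
- by apply: is_idealMr => //; apply: is_idealXD => //; apply: is_idealZ.
- by apply: is_idealMl => //; apply: is_idealXD => //; apply: is_idealZ.
- by rewrite !exprZn -scalerAl -scalerAr; do 2!apply: is_idealZ => //.
Qed.

End StabilityJ0.

Section Weights.
Variables (K : fieldType) (p q : nat).

Definition wt0 (nu : 'X_{1..5}) : int :=
  (nu o0)%:Z - (p * (nu o1 + nu o2))%N%:Z + (q * (nu o3 + nu o4))%N%:Z.
Definition wtm (nu : 'X_{1..5}) : int :=
  (nu o3 + nu o4)%N%:Z - (nu o1 + nu o2)%N%:Z.

Lemma Gact_mpolyX (t z : K) nu : t != 0 -> z != 0 ->
  Gact p q t z 'X_[nu] = (t ^ wt0 nu * z ^ wtm nu) *: 'X_[nu].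
Proof.
move=> t_neq0 z_neq0.
have -> : t ^ wt0 nu * z ^ wtm nu = t ^+ nu o0 * (t ^- p * z^-1) ^+ (nu o1 + nu o2)
                                     * (t ^+ q * z) ^+ (nu o3 + nu o4).
  rewrite /wt0 /wtm !expfzDr // -!exprnN -!exprnP !exprMn !exprVn -!exprM.
  by rewrite [(p * _)%N]mulnC [(q * _)%N]mulnC; field; rewrite ?expf_neq0.
rewrite mpolyX5E !rmorphM !rmorphXn /= GactX0 GactX1 GactX2 GactX3 GactX4.
by rewrite !exprZn -!mul_mpolyC !exprD !rmorphM; ring.
Qed.

Lemma mcoeff_Gact (t z : K) f nu : t != 0 -> z != 0 ->
  (Gact p q t z f)@_nu = t ^ wt0 nu * z ^ wtm nu * f@_nu.
Proof.
move=> t_neq0 z_neq0; elim/mpolyind: f => [|c mu f _ _ IH]; first by rewrite !raddf0 mulr0.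
rewrite rmorphD /= linearZ /= Gact_mpolyX // scalerA !mcoeffD !mcoeffZ !mcoeffX IH.
by case: eqP => [->|_]; rewrite ?mulr0 ?mulr1 //; ring.
Qed.

Lemma mcoeff_GactBZ (t z c : K) f nu : t != 0 -> z != 0 ->
  (Gact p q t z f - c *: f)@_nu = (t ^ wt0 nu * z ^ wtm nu - c) * f@_nu.
Proof. by move=> t_neq0 z_neq0; rewrite mcoeffB mcoeff_Gact // mcoeffZ mulrBl. Qed.

End Weights.

Lemma expf_eq1_neq0 (R : nzRingType) (x : R) (n : nat) :
  (0 < n)%N -> x ^+ n = 1 -> x != 0.
Proof.
move=> n_gt0 xn1; apply/eqP => x0; move/eqP: xn1.
by rewrite x0 expr0n gtn_eqF //= eq_sym oner_eq0.
Qed.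

Lemma exprz_eq_absz (F : fieldType) (x : F) (k l : int) :
  x != 0 -> x ^ k = x ^ l -> x ^+ `|k - l| = 1.
Proof.
move=> x_neq0 xkl; have : x ^ (k - l) = 1.
  by rewrite expfzDr // xkl -expfzDr // subrr.
by case: (k - l) => n //= /eqP; rewrite invr_eq1 => /eqP.
Qed.

Lemma exprz_eq_mod (F : fieldType) (x : F) (m : nat) (v d : int) :
  x != 0 -> x ^+ m = 1 -> (m%:Z %| v - d)%Z -> x ^ v = x ^ d.
Proof.
move=> x_neq0 xm /dvdzP [e ve]; have -> : v = d + e * m by rewrite -ve; ring.
by rewrite expfzDr // [e * _]mulrC -exprz_exp -exprnP xm exp1rz mulr1.
Qed.

Lemma two_expr_neq1 (R : numDomainType) (n : nat) : (0 < n)%N -> 2%:R ^+ n != 1 :> R.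
Proof.
move=> n_gt0; rewrite -natrX pnatr_eq1 gtn_eqF //.
by rewrite -[X in (X < _)%N](expn0 2) ltn_exp2l.
Qed.

Lemma weight_separation (K : numClosedFieldType) (m : nat) (w1 v1 w2 v2 : int) :
  (0 < m)%N -> (w1 != w2) || ~~ (m%:Z %| v1 - v2)%Z ->
  exists t z : K, [/\ t != 0, z ^+ m = 1 & t ^ w1 * z ^ v1 != t ^ w2 * z ^ v2].
Proof.
move=> m_gt0 /orP [w_neq|v_ndvd].
  exists 2%:R, 1; rewrite pnatr_eq0 expr1n !exp1rz !mulr1; split => //.
  apply/eqP => /exprz_eq_absz; rewrite pnatr_eq0 => /(_ isT) /eqP.
  by apply/negP/two_expr_neq1; rewrite absz_gt0 subr_eq0.
have m_neq0 : m%:R != 0 :> K by rewrite pnatr_eq0 -lt0n.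
have [z z_prim] := closed_prim_root_exists m_gt0 m_neq0.
have zm := prim_expr_order z_prim.
exists 1, z; rewrite oner_eq0 !exp1rz !mul1r; split => //.
apply/eqP => /(exprz_eq_absz (expf_eq1_neq0 m_gt0 zm)) /eqP.
by rewrite -(prim_order_dvd z_prim) => m_dvd; case/negP: v_ndvd; rewrite dvdzE.
Qed.

Section StandardWeights.
Variables (p q a : nat).
Hypotheses (p_gt0 : (0 < p)%N) (lt_pq : (p < q)%N) (a_gt0 : (0 < a)%N).
Local Notation m := (a * (q - p))%N.
Local Notation standard := (standard p q a).
Local Notation wt0 := (wt0 p q).

Let q_split : q = (p + (q - p))%N. Proof. by rewrite subnKC // ltnW. Qed.

Lemma standard_weight_injective nu1 nu2 : standard nu1 -> standard nu2 ->
  wt0 nu1 = wt0 nu2 -> (m%:Z %| wtm nu1 - wtm nu2)%Z -> nu1 = nu2.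
Proof.
case/and4P => /eqP nu1_2 /eqP nu1_4 lt_nu1 corner1.
case/and4P => /eqP nu2_2 /eqP nu2_4 lt_nu2 corner2.
rewrite /wt0 /wtm nu1_2 nu1_4 nu2_2 nu2_4 !addn0 => ew ev.
rewrite q_split in corner1 corner2 ew.
have [e0 e1 e3] := triple_weight_inj lt_nu1 lt_nu2 corner1 corner2 ew ev.
apply/mnmP => i; case: (ord5P i) => [|[|[|[|]]]] ->; by rewrite ?nu1_2 ?nu2_2 ?nu1_4 ?nu2_4.
Qed.

Lemma standard_weight_exists (n d : int) :
  exists nu, [/\ standard nu, wt0 nu = n & (m%:Z %| wtm nu - d)%Z].
Proof.
have r_gt0 : (0 < q - p)%N by rewrite subn_gt0.
have [i [j [k [lt_i corner ew ev]]]] := triple_weight_surj n d p_gt0 r_gt0 a_gt0.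
pose nu : 'X_{1..5} := [multinom (nth 0%N [:: i; j; 0%N; k; 0%N] l) | l < 5].
have [nu0 nu1 nu2 nu3 nu4] :
    [/\ nu o0 = i, nu o1 = j, nu o2 = 0%N, nu o3 = k & nu o4 = 0%N].
  by rewrite !mnmE !inordK.
rewrite -q_split in corner ew.
by exists nu; rewrite /standard /wt0 /wtm nu0 nu1 nu2 nu3 nu4 !addn0 eqxx lt_i.
Qed.

Lemma standard_separation (K : numClosedFieldType) nu1 nu2 :
  standard nu1 -> standard nu2 -> nu1 != nu2 ->
  exists t z : K, [/\ t != 0, z ^+ m = 1 &
    t ^ wt0 nu1 * z ^ wtm nu1 != t ^ wt0 nu2 * z ^ wtm nu2].
Proof.
move=> std1 std2 nu12; apply: weight_separation; first by rewrite muln_gt0 a_gt0 subn_gt0.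
apply: contraR nu12; rewrite negb_or => /andP [/negPn/eqP ew /negPn ev].
by apply/eqP; apply: standard_weight_injective.
Qed.

End StandardWeights.

Section GStableIdeals.
Variables (K : numClosedFieldType) (p q a : nat).
Hypotheses (lt_pq : (p < q)%N) (a_gt0 : (0 < a)%N).
Local Notation m := (a * (q - p))%N.
Local Notation standard := (standard p q a).
Local Notation wt0 := (wt0 p q).
Local Notation J0 := (@inJ0 K p q a).
Variable J : {mpoly K[5]} -> Prop.
Hypotheses (idJ : is_ideal J) (GJ : G_stable p q m J).

Let m_gt0 : (0 < m)%N. Proof. by rewrite muln_gt0 a_gt0 subn_gt0. Qed.

Lemma ideal_standard_msupp s nu :
  {subset msupp s <= standard} -> J s -> nu \in msupp s -> J 'X_[nu].
Proof.
move=> + + nu_s; have [N] := ubnP (size (msupp s)).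
elim: N s nu_s => // N IH s nu_s size_s std_s Js.
case: (boolP (has (predC1 nu) (msupp s))) => [/hasP [mu mu_s /= mu_nu] | /hasPn all_nu].
  rewrite eq_sym in mu_nu.
  have [t [z [t_neq0 zm chi_neq]]] :=
    standard_separation lt_pq a_gt0 K (std_s _ nu_s) (std_s _ mu_s) mu_nu.
  have z_neq0 := expf_eq1_neq0 m_gt0 zm.
  (* the torus kills the mu-term and keeps the nu-term *)
  pose s' := Gact p q t z s - (t ^ wt0 mu * z ^ wtm mu) *: s.
  have supp_s' k : k \in msupp s' -> k \in msupp s.
    by rewrite !mcoeff_msupp mcoeff_GactBZ // mulf_eq0 negb_or => /andP [].
  apply: (IH s') => //.
  - rewrite mcoeff_msupp mcoeff_GactBZ // mulf_neq0 ?subr_eq0 //.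
    by rewrite -mcoeff_msupp.
  - rewrite ltnS in size_s; apply: leq_trans size_s; rewrite ltnNge; apply/negP.
    move=> /(uniq_min_size (msupp_uniq s') supp_s') [_ /(_ mu)].
    by rewrite mu_s mcoeff_msupp mcoeff_GactBZ // subrr mul0r eqxx.
  - by move=> k /supp_s' /std_s.
  - by apply: (is_idealB idJ); [apply: GJ | apply: (is_idealZ idJ)].
have s_mono : s = s@_nu *: 'X_[nu].
  apply/mpolyP => k; rewrite mcoeffZ mcoeffX; case: (eqVneq nu k) => [<-|nu_k].
    by rewrite mulr1.
  rewrite mulr0; apply/memN_msupp_eq0/negP => /all_nu /=.
  by rewrite eq_sym nu_k.
by apply: (is_idealZK idJ (c := s@_nu)); rewrite -?mcoeff_msupp // -s_mono.
Qed.

Hypothesis J0_sub : forall f, J0 f -> J f.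

Lemma isotypic_standard_rep mu (n d : int) g :
  standard mu -> wt0 mu = n -> (m%:Z %| wtm mu - d)%Z ->
  in_isotypic p q m n d J g -> exists c, J (g - c *: 'X_[mu]).
Proof.
move=> std_mu w_mu v_mu iso_g; have [r [J0gr std_r]] := inJ0_reduce p q a g.
exists r@_mu; rewrite -(subrK r g) -addrA; apply: (is_idealD idJ); first exact: J0_sub.
apply: is_ideal_msupp => // nu; rewrite mcoeff_msupp mcoeffB mcoeffZ mcoeffX.
case: (eqVneq mu nu) => [<-|mu_nu]; first by rewrite mulr1 subrr eqxx.
rewrite mulr0 subr0 -mcoeff_msupp => nu_r.
have nu_mu : nu != mu by rewrite eq_sym.
have [t [z [t_neq0 zm chi_neq]]] :=
  standard_separation lt_pq a_gt0 K (std_r _ nu_r) std_mu nu_mu.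
have z_neq0 := expf_eq1_neq0 m_gt0 zm.
have chi_mu : t ^ n * z ^ d = t ^ wt0 mu * z ^ wtm mu.
  by rewrite -w_mu (exprz_eq_mod z_neq0 zm v_mu).
pose s := Gact p q t z r - (t ^ n * z ^ d) *: r.
apply: (@ideal_standard_msupp s).
- move=> k; rewrite !mcoeff_msupp mcoeff_GactBZ // mulf_eq0 negb_or => /andP [_].
  by rewrite -mcoeff_msupp; apply: std_r.
- have -> : s = (Gact p q t z g - (t ^ n * z ^ d) *: g)
                - (Gact p q t z (g - r) - (t ^ n * z ^ d) *: (g - r)).
    by rewrite /s rmorphB /= -!mul_mpolyC; ring.
  have Jgr := J0_sub J0gr.
  apply: (is_idealB idJ); first exact: iso_g.
  by apply: (is_idealB idJ); [apply: GJ | apply: (is_idealZ idJ)].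
- by rewrite mcoeff_msupp mcoeff_GactBZ // chi_mu mulf_neq0 ?subr_eq0 // -mcoeff_msupp.
Qed.

Hypothesis dimJ : forall n d : int, isotypic_dim1 p q m n d J.

Lemma standard_notin_ideal nu : standard nu -> ~ J 'X_[nu].
Proof.
move=> std_nu J_nu; have [f [iso_f f_notin _]] := dimJ (wt0 nu) (wtm nu).
have v_nu : (m%:Z %| wtm nu - wtm nu)%Z by rewrite subrr dvdz0.
have [c Jfc] := isotypic_standard_rep std_nu erefl v_nu iso_f.
by apply: f_notin; rewrite -(subrK (c *: 'X_[nu]) f); apply: (is_idealD idJ) => //; apply: is_idealZ.
Qed.

Lemma ideal_sub_inJ0 f : J f -> J0 f.
Proof.
move=> Jf; have [r [J0fr std_r]] := inJ0_reduce p q a f.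
suff r0 : r = 0 by rewrite r0 subr0 in J0fr.
have Jr : J r by rewrite -(subKr f r); apply: (is_idealB idJ) => //; apply: J0_sub.
apply/mpolyP => nu; rewrite mcoeff0; apply/memN_msupp_eq0/negP => nu_r.
exact: (standard_notin_ideal (std_r _ nu_r) (ideal_standard_msupp std_r Jr nu_r)).
Qed.

End GStableIdeals.

Section Isotypic.
Variables (K : fieldType) (p q m : nat) (J : {mpoly K[5]} -> Prop).
Hypothesis idJ : is_ideal J.

Lemma mpolyX_isotypic (n d : int) nu : (0 < m)%N ->
  wt0 p q nu = n -> (m%:Z %| wtm nu - d)%Z -> in_isotypic p q m n d J 'X_[nu].
Proof.
move=> m_gt0 w_nu v_nu t z t_neq0 zm; have z_neq0 := expf_eq1_neq0 m_gt0 zm.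
rewrite Gact_mpolyX // -w_nu (exprz_eq_mod z_neq0 zm v_nu) subrr.
exact: is_ideal0.
Qed.

Variables (n d : int).
Hypothesis dimJ : isotypic_dim1 p q m n d J.

Lemma isotypic_dim1_one_notin : ~ J 1.
Proof.
have [f [_ f_notin _]] := dimJ.
by move=> /(is_idealMr idJ f); rewrite mul1r.
Qed.

Lemma isotypic_proportional A B :
  in_isotypic p q m n d J A -> in_isotypic p q m n d J B ->
  J B \/ exists c, J (A - c *: B).
Proof.
have [f [_ _ dim_f]] := dimJ => /dim_f [c1 JA] /dim_f [c2 JB].
have [c2_0|c2_neq0] := eqVneq c2 0; first by left; rewrite c2_0 scale0r subr0 in JB.
right; exists (c1 / c2).
have -> : A - c1 / c2 *: B = (A - c1 *: f) - c1 / c2 *: (B - c2 *: f).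
  by rewrite scalerBr scalerA divfK // opprB addrA subrK.
by apply: (is_idealB idJ) => //; apply: is_idealZ.
Qed.

End Isotypic.

Section BorelStableIdeals.
Variables (K : numFieldType) (p q a : nat).
Hypotheses (lt_pq : (p < q)%N) (a_gt0 : (0 < a)%N).
Local Notation m := (a * (q - p))%N.
Local Notation X := (Xc K).
Variable J : {mpoly K[5]} -> Prop.
Hypotheses (idJ : is_ideal J) (BJ : B_stable J).
Hypothesis dimJ : forall n d : int, isotypic_dim1 p q m n d J.

Let m_gt0 : (0 < m)%N. Proof. by rewrite muln_gt0 a_gt0 subn_gt0. Qed.

Lemma ideal_unipotent_image (n d : int) A B :
  in_isotypic p q m n d J A -> in_isotypic p q m n d J B ->
  Bact 1 1 1 A = A + B -> Bact 1 1 1 B = B -> J B.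
Proof.
move=> iso_A iso_B uA uB.
have [//|[c JAB]] := isotypic_proportional idJ (dimJ n d) iso_A iso_B.
have -> : B = Bact 1 1 1 (A - c *: B) - (A - c *: B).
  by rewrite rmorphB /= linearZ /= uA uB -!mul_mpolyC; ring.
by apply: (is_idealB idJ) => //; apply: BJ; rewrite ?mulr1.
Qed.

Lemma Xc12_isotypic k : k = 1%N \/ k = 2%N -> in_isotypic p q m (- p%:Z) (-1) J (X k).
Proof.
by case=> -> t z _ _; rewrite ?GactX1 ?GactX2 -exprnN exprN1 subrr; apply: is_ideal0.
Qed.

Lemma Xc34_isotypic k : k = 3%N \/ k = 4%N -> in_isotypic p q m q 1 J (X k).
Proof. by case=> -> t z _ _; rewrite ?GactX3 ?GactX4 subrr; apply: is_ideal0. Qed.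

Lemma ideal_X2 : J (X 2).
Proof.
apply: (ideal_unipotent_image (Xc12_isotypic (or_introl erefl)) (Xc12_isotypic (or_intror erefl))).
  by rewrite BactX1 !scale1r.
by rewrite BactX2 scale1r.
Qed.

Lemma ideal_X4 : J (X 4).
Proof.
apply: (ideal_unipotent_image (Xc34_isotypic (or_introl erefl)) (Xc34_isotypic (or_intror erefl))).
  by rewrite BactX3 !scale1r.
by rewrite BactX4 scale1r.
Qed.

Lemma ideal_corner : J (X 1 ^+ (a * q) * X 3 ^+ (a * p)).
Proof.
set M := X 1 ^+ (a * q) * X 3 ^+ (a * p).
have iso_M : in_isotypic p q m 0 0 J M.
  have -> : M = 'X_[gen13 p q a] by rewrite /M mpolyXD !mpolyXn.
  apply: mpolyX_isotypic => //;
    rewrite /wt0 /wtm !mnmDE !mulmnE !mnm1_inordE //= !mul0n !mul1n.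
    by nia.
  by apply/dvdzP; exists (-1); nia.
have iso_1 : in_isotypic p q m 0 0 J 1.
  by rewrite -mpolyX0; apply: mpolyX_isotypic; rewrite // /wt0 /wtm !mnm0E !addn0 ?muln0.
have one_notin := isotypic_dim1_one_notin idJ (dimJ 0 0).
have [//|[c JMc]] := isotypic_proportional idJ (dimJ 0 0) iso_M iso_1.
(* the torus element diag(2, 1/2) of B rescales M and fixes 1 *)
have two_neq0 : 2%:R != 0 :> K by rewrite pnatr_eq0.
set l : K := 2%:R ^+ (a * q + a * p).
have tM : Bact 2%:R 0 2%:R^-1 M = l *: M.
  rewrite rmorphM !rmorphXn /= BactX1 BactX3 !scale0r !addr0 !exprZn.
  by rewrite -scalerAl -scalerAr scalerA -exprD.
have Jc : J (((l - 1) * c) *: 1).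
  have -> : ((l - 1) * c) *: 1 = Bact 2%:R 0 2%:R^-1 (M - c *: 1) - l *: (M - c *: 1).
    by rewrite rmorphB /= linearZ /= rmorph1 tM -!mul_mpolyC !rmorphM rmorphB /=; ring.
  by apply: (is_idealB idJ); [apply: BJ; rewrite ?mulfV | apply: is_idealZ].
suff c0 : c = 0 by rewrite c0 scale0r subr0 in JMc.
apply/eqP; apply: contraT => c_neq0; case: one_notin; apply: (is_idealZK idJ _ Jc).
apply: mulf_neq0 c_neq0; rewrite subr_eq0 two_expr_neq1 //; nia.
Qed.

Lemma inJ0_sub_ideal : J (Heq K p q) -> forall f, inJ0 p q a f -> J f.
Proof.
move=> J_H; apply: inJ0_min => //; [|exact: ideal_X2 | exact: ideal_X4 | exact: ideal_corner].
have -> : X 0 ^+ (q - p) = Heq K p q + (X 1 * X 4 - X 2 * X 3) by rewrite /Heq subrK.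
apply: is_idealD => //; apply: is_idealB => //.
  by apply: is_idealMl => //; apply: ideal_X4.
by apply: is_idealMr => //; apply: ideal_X2.
Qed.

End BorelStableIdeals.

Section IdealJ0.
Variables (K : numClosedFieldType) (p q a : nat).
Hypotheses (p_gt0 : (0 < p)%N) (lt_pq : (p < q)%N) (a_gt0 : (0 < a)%N).
Local Notation J0 := (@inJ0 K p q a).
Local Notation m := (a * (q - p))%N.

Lemma inJ0_isotypic_dim1 (n d : int) : isotypic_dim1 p q m n d J0.
Proof.
have [mu [std_mu w_mu v_mu]] := standard_weight_exists p_gt0 lt_pq a_gt0 n d.
exists 'X_[mu]; split.
- apply: mpolyX_isotypic w_mu v_mu; first exact: inJ0_ideal.
  by rewrite muln_gt0 a_gt0 subn_gt0.
- by move/inJ0_mcoeff_standard => /(_ mu std_mu) /eqP; rewrite mcoeffX eqxx oner_eq0.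
- by move=> g; apply: (isotypic_standard_rep lt_pq a_gt0 (inJ0_ideal K p q a) (@inJ0_G_stable K p q a)).
Qed.

End IdealJ0.

Theorem proposition5p1 (R : realType) (p q m a : nat) :
  (0 < p)%N -> (p <= q)%N -> coprime p q -> (0 < m)%N ->
  m = (a * (q - p))%N ->
  forall J : {mpoly R[i][5]} -> Prop,
    (in_Hilb p q m J /\ B_stable J) <-> (forall f, J f <-> inJ0 p q a f).
Proof.
move=> p_gt0 _ _ m_gt0 m_def J; subst m.
have /andP [a_gt0 lt_pq] : ((0 < a) && (p < q))%N by rewrite -[(p < q)%N]subn_gt0 -muln_gt0.
split => [[[idJ J_H GJ dimJ] BJ] f | J_J0].
  have J0_sub := inJ0_sub_ideal lt_pq a_gt0 idJ BJ dimJ J_H.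
  by split; [apply: ideal_sub_inJ0 | apply: J0_sub].
have -> : J = inJ0 p q a.
  by apply: functional_extensionality => f; apply: propositional_extensionality.
split; last exact: inJ0_B_stable.
split; [exact: inJ0_ideal | exact: Heq_inJ0 | exact: inJ0_G_stable | ].
by move=> n d; apply: inJ0_isotypic_dim1.
Qed.
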